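(* Let $V$ be a commutative unital quantale whose underlying lattice is a frame and in which $k=\top$. If $(Y,b,+)$ is a strongly unital object in $\mathsf{VGrp}$, then for every $y\in Y$, \[b(0,y)=b(y,0)\otimes b(0,y).\]
   Context: A commutative unital quantale $V$ is a complete lattice (top $\top$, bottom $\bot$) with a commutative associative operation $\otimes$ with unit $k$ preserving arbitrary joins in each variable. A $V$-category $(X,a)$: $a\colon X\times X\to V$ with $k\le a(x,x)$ and $a(x,x')\otimes a(x',x'')\le a(x,x'')$. A $V$-group $(X,a,+)$ is a $V$-category with a group structure (additive, not necessarily abelian) such that $a(x_1,x_2)\otimes a(x_1',x_2')\le a(x_1+x_1',x_2+x_2')$; $V$-homomorphisms are group homomorphisms $f$ with $a(x,x')\le b(f(x),f(x'))$; this is the category $\mathsf{VGrp}$, pointed when $k=\top$. Limits are computed as in groups with the initial structure; the product of $(X,a),(Y,b)$ carries $(a\wedge b)((x,y),(x',y'))=a(x,x')\wedge b(y,y')$; kernels and pullbacks carry the restricted structure. Two morphisms with common codomain are jointly strongly epimorphic if whenever both factor through a monomorphism $m$, $m$ is an isomorphism. A point (split epimorphism $f\colon A\to Y$ with chosen section $s$) is strong if the kernel of $f$ and $s$ are jointly strongly epimorphic, and stably strong if every pullback of it along any morphism $g\colon Z\to Y$ (with induced section) is strong. An object $Y$ is strongly unital if the point $(\pi_2\colon Y\times Y\to Y,\ \langle 1,1\rangle)$ is stably strong. *)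

From Stdlib Require Import ProofIrrelevance.

Set Implicit Arguments.
Unset Strict Implicit.

(* A complete lattice given by its order and arbitrary joins (qsup),
   with a commutative associative tensor with unit qk preserving all joins
   in each variable (in the first variable by commutativity). *)
Record quantale : Type := Quantale {
  qcar :> Type;
  qle : qcar -> qcar -> Prop;
  qsup : (qcar -> Prop) -> qcar;
  qten : qcar -> qcar -> qcar;
  qk : qcar;
  qle_refl : forall x, qle x x;
  qle_trans : forall x y z, qle x y -> qle y z -> qle x z;
  qle_antisym : forall x y, qle x y -> qle y x -> x = y;
  qsup_ub : forall (S : qcar -> Prop) x, S x -> qle x (qsup S);
  qsup_least : forall (S : qcar -> Prop) y, (forall x, S x -> qle x y) -> qle (qsup S) y;
  qten_comm : forall x y, qten x y = qten y x;
  qten_assoc : forall x y z, qten x (qten y z) = qten (qten x y) z;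
  qten_unit : forall x, qten qk x = x;
  qten_sup : forall x (S : qcar -> Prop),
      qten x (qsup S) = qsup (fun z => exists s, S s /\ z = qten x s)
}.

Arguments qk : clear implicits.

Definition qtop (V : quantale) : V := qsup (fun _ : V => True).
Definition qbot (V : quantale) : V := qsup (fun _ : V => False).
Definition qmeet (V : quantale) (x y : V) : V := qsup (fun z => qle z x /\ qle z y).

Definition is_frame (V : quantale) : Prop :=
  forall (x : V) (S : V -> Prop),
    qmeet x (qsup S) = qsup (fun z => exists s, S s /\ z = qmeet x s).

Section QuantaleFacts.
Variable V : quantale.

Lemma qmeet_l (x y : V) : qle (qmeet x y) x.
Proof. apply qsup_least. intros z [H _]; exact H. Qed.

Lemma qmeet_r (x y : V) : qle (qmeet x y) y.
Proof. apply qsup_least. intros z [_ H]; exact H. Qed.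

Lemma qmeet_glb (x y z : V) : qle z x -> qle z y -> qle z (qmeet x y).
Proof. intros; apply qsup_ub; split; assumption. Qed.

Lemma qten_mono_r (z x y : V) : qle x y -> qle (qten z x) (qten z y).
Proof.
  intros Hxy.
  assert (E : qsup (fun w => w = x \/ w = y) = y).
  { apply qle_antisym.
    - apply qsup_least; intros w [->| ->]; [exact Hxy | apply qle_refl].
    - apply qsup_ub; right; reflexivity. }
  rewrite <- E, qten_sup. apply qsup_ub. exists x; split; [left|]; reflexivity.
Qed.

Lemma qten_mono (x x' y y' : V) :
  qle x x' -> qle y y' -> qle (qten x y) (qten x' y').
Proof.
  intros H1 H2. apply qle_trans with (qten x y').
  - apply qten_mono_r; exact H2.
  - rewrite (qten_comm x), (qten_comm x'). apply qten_mono_r; exact H1.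
Qed.

Lemma qten_meet (a b c d : V) :
  qle (qten (qmeet a b) (qmeet c d)) (qmeet (qten a c) (qten b d)).
Proof.
  apply qmeet_glb; apply qten_mono; auto using qmeet_l, qmeet_r.
Qed.

End QuantaleFacts.

Record vgrp (V : quantale) : Type := VGrp {
  gcar :> Type;
  g0 : gcar;
  gadd : gcar -> gcar -> gcar;
  gopp : gcar -> gcar;
  gaddA : forall x y z, gadd x (gadd y z) = gadd (gadd x y) z;
  gadd0l : forall x, gadd g0 x = x;
  gadd0r : forall x, gadd x g0 = x;
  gaddNl : forall x, gadd (gopp x) x = g0;
  gaddNr : forall x, gadd x (gopp x) = g0;
  gd : gcar -> gcar -> V;
  gd_refl : forall x, qle (qk V) (gd x x);
  gd_trans : forall x y z, qle (qten (gd x y) (gd y z)) (gd x z);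
  gd_add : forall x1 x2 y1 y2,
      qle (qten (gd x1 x2) (gd y1 y2)) (gd (gadd x1 y1) (gadd x2 y2))
}.

Arguments g0 {V} v.

Record vhom (V : quantale) (A B : vgrp V) : Type := VHom {
  hfun :> A -> B;
  hadd : forall x y, hfun (gadd x y) = gadd (hfun x) (hfun y);
  hd : forall x y, qle (gd x y) (gd (hfun x) (hfun y))
}.

Section Constructions.
Variable V : quantale.

Lemma hom_zero (A B : vgrp V) (f : vhom A B) : f (g0 A) = g0 B.
Proof.
  assert (H : f (g0 A) = gadd (f (g0 A)) (f (g0 A))).
  { rewrite <- hadd, gadd0l; reflexivity. }
  transitivity (gadd (gadd (gopp (f (g0 A))) (f (g0 A))) (f (g0 A))).
  - rewrite gaddNl, gadd0l; reflexivity.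
  - rewrite <- gaddA, <- H; apply gaddNl.
Qed.

Lemma hom_opp (A B : vgrp V) (f : vhom A B) (x : A) : f (gopp x) = gopp (f x).
Proof.
  assert (H : gadd (f (gopp x)) (f x) = g0 B).
  { rewrite <- hadd, gaddNl; apply hom_zero. }
  rewrite <- (gadd0r (f (gopp x))), <- (gaddNr (f x)), gaddA, H, gadd0l.
  reflexivity.
Qed.

Definition subgrp (A : vgrp V) (P : A -> Prop) (P0 : P (g0 A))
  (Padd : forall x y, P x -> P y -> P (gadd x y))
  (Popp : forall x, P x -> P (gopp x)) : vgrp V.
Proof.
  refine (@VGrp V {x : A | P x} (exist _ (g0 A) P0)
    (fun u v => exist _ (gadd (proj1_sig u) (proj1_sig v))
                  (Padd _ _ (proj2_sig u) (proj2_sig v)))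
    (fun u => exist _ (gopp (proj1_sig u)) (Popp _ (proj2_sig u)))
    _ _ _ _ _ (fun u v => gd (proj1_sig u) (proj1_sig v)) _ _ _).
  - intros [x ?] [y ?] [z ?]; apply subset_eq_compat; apply gaddA.
  - intros [x ?]; apply subset_eq_compat; apply gadd0l.
  - intros [x ?]; apply subset_eq_compat; apply gadd0r.
  - intros [x ?]; apply subset_eq_compat; apply gaddNl.
  - intros [x ?]; apply subset_eq_compat; apply gaddNr.
  - intros [x ?]; apply gd_refl.
  - intros [x ?] [y ?] [z ?]; apply gd_trans.
  - intros [x1 ?] [x2 ?] [y1 ?] [y2 ?]; apply gd_add.
Defined.

Definition subincl (A : vgrp V) P P0 Padd Popp :
  vhom (@subgrp A P P0 Padd Popp) A.
Proof.
  refine (@VHom V (@subgrp A P P0 Padd Popp) A (fun u : {x : A | P x} => proj1_sig u) _ _).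
  - intros; reflexivity.
  - intros; apply qle_refl.
Defined.

Definition prodgrp (A B : vgrp V) : vgrp V.
Proof.
  refine (@VGrp V (A * B)%type (g0 A, g0 B)
    (fun p q => (gadd (fst p) (fst q), gadd (snd p) (snd q)))
    (fun p => (gopp (fst p), gopp (snd p)))
    _ _ _ _ _ (fun p q => qmeet (gd (fst p) (fst q)) (gd (snd p) (snd q))) _ _ _).
  - intros [] [] []; simpl; rewrite !gaddA; reflexivity.
  - intros []; simpl; rewrite !gadd0l; reflexivity.
  - intros []; simpl; rewrite !gadd0r; reflexivity.
  - intros []; simpl; rewrite !gaddNl; reflexivity.
  - intros []; simpl; rewrite !gaddNr; reflexivity.
  - intros []; apply qmeet_glb; apply gd_refl.
  - intros [] [] []; simpl. eapply qle_trans; [apply qten_meet|].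
    apply qmeet_glb; eapply qle_trans;
      [apply qmeet_l | apply gd_trans | apply qmeet_r | apply gd_trans].
  - intros [] [] [] []; simpl. eapply qle_trans; [apply qten_meet|].
    apply qmeet_glb; eapply qle_trans;
      [apply qmeet_l | apply gd_add | apply qmeet_r | apply gd_add].
Defined.

Definition prod_snd (A B : vgrp V) : vhom (prodgrp A B) B.
Proof.
  refine (@VHom V (prodgrp A B) B (fun p => snd p) _ _).
  - intros; reflexivity.
  - intros; apply qmeet_r.
Defined.

Definition diag (Y : vgrp V) : vhom Y (prodgrp Y Y).
Proof.
  refine (@VHom V Y (prodgrp Y Y) (fun y => (y, y)) _ _).
  - intros; reflexivity.
  - intros; apply qmeet_glb; apply qle_refl.
Defined.

Lemma diag_split (Y : vgrp V) : forall y : Y, prod_snd Y Y (diag Y y) = y.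
Proof. reflexivity. Qed.

Definition kergrp (A B : vgrp V) (f : vhom A B) : vgrp V.
Proof.
  refine (@subgrp A (fun x => f x = g0 B) (hom_zero f) _ _).
  - intros x y Hx Hy; rewrite hadd, Hx, Hy; apply gadd0l.
  - intros x Hx; rewrite hom_opp, Hx, <- (gadd0l (gopp (g0 B))); apply gaddNr.
Defined.

Definition kerincl (A B : vgrp V) (f : vhom A B) : vhom (kergrp f) A.
Proof. unfold kergrp. apply subincl. Defined.

Definition pbgrp (A Y Z : vgrp V) (f : vhom A Y) (g : vhom Z Y) : vgrp V.
Proof.
  refine (@subgrp (prodgrp Z A) (fun p => g (fst p) = f (snd p)) _ _ _).
  - simpl; rewrite !hom_zero; reflexivity.
  - intros [z a] [z' a'] H H'; simpl in *; rewrite !hadd, H, H'; reflexivity.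
  - intros [z a] H; simpl in *; rewrite !hom_opp, H; reflexivity.
Defined.

Definition pb_proj (A Y Z : vgrp V) (f : vhom A Y) (g : vhom Z Y) :
  vhom (pbgrp f g) Z.
Proof.
  refine (@VHom V (pbgrp f g) Z (fun p => fst (proj1_sig p)) _ _).
  - intros; reflexivity.
  - intros [[z a] ?] [[z' a'] ?]; apply qmeet_l.
Defined.

Definition pb_sec (A Y Z : vgrp V) (f : vhom A Y) (s : vhom Y A)
  (Hs : forall y, f (s y) = y) (g : vhom Z Y) : vhom Z (pbgrp f g).
Proof.
  refine (@VHom V Z (pbgrp f g)
            (fun z => exist _ (z, s (g z)) (eq_sym (Hs (g z)))) _ _).
  - intros x y; apply subset_eq_compat; simpl; rewrite !hadd; reflexivity.
  - intros x y; simpl; apply qmeet_glb; [apply qle_refl|].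
    eapply qle_trans; [apply (hd g) | apply (hd s)].
Defined.

Definition is_mono (M C : vgrp V) (m : vhom M C) : Prop :=
  forall (Z : vgrp V) (u v : vhom Z M),
    (forall z, m (u z) = m (v z)) -> forall z, u z = v z.

Definition is_iso (M C : vgrp V) (m : vhom M C) : Prop :=
  exists n : vhom C M, (forall x, n (m x) = x) /\ (forall y, m (n y) = y).

Definition factors_through (A M C : vgrp V) (f : vhom A C) (m : vhom M C) : Prop :=
  exists f' : vhom A M, forall x, m (f' x) = f x.

Definition jointly_strongly_epi (A B C : vgrp V) (f : vhom A C) (g : vhom B C) : Prop :=
  forall (M : vgrp V) (m : vhom M C),
    is_mono m -> factors_through f m -> factors_through g m -> is_iso m.

Definition strong_point (A Y : vgrp V) (f : vhom A Y) (s : vhom Y A) : Prop :=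
  jointly_strongly_epi (kerincl f) s.

Definition stably_strong (A Y : vgrp V) (f : vhom A Y) (s : vhom Y A)
  (Hs : forall y, f (s y) = y) : Prop :=
  forall (Z : vgrp V) (g : vhom Z Y), strong_point (pb_proj f g) (pb_sec Hs g).

Definition strongly_unital (Y : vgrp V) : Prop :=
  stably_strong (@diag_split Y).

End Constructions.

From Stdlib Require Import ProofIrrelevance Setoid.

Set Implicit Arguments.
Unset Strict Implicit.

(* When k = ⊤, pulling the point (π₂, ⟨1,1⟩) back along the zero map and along
   the identity gives pullbacks that are, as groups, just Y × Y.  Strong
   unitality forces every V-group structure on Y × Y which is finer than the
   pullback structure and still receives the kernel and the section to
   coincide with it.  Along the zero map, the structure b ⊗ b shows that
   ∧ and ⊗ agree on values of b.  Along the identity, this makes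
   b(p₁,q₁) ∧ b(p₂,q₂) ∧ (b(q₁,p₁) ⇒ b(q₂,p₂)) a V-group structure (the frame
   provides ⇒), and comparing it at (0,0), (0,y) yields b(0,y) ≤ b(y,0).
   Hence b(0,y) = b(y,0) ∧ b(0,y) = b(y,0) ⊗ b(0,y). *)

Section QuantaleFacts.
Variable V : quantale.

Lemma qle_top (x : V) : qle x (qtop V).
Proof. apply qsup_ub; exact I. Qed.

Lemma qmeet_comm (x y : V) : qmeet x y = qmeet y x.
Proof. apply qle_antisym; apply qmeet_glb; auto using qmeet_l, qmeet_r. Qed.

Lemma qten_swap (a b c d : V) :
  qten (qten a b) (qten c d) = qten (qten a c) (qten b d).
Proof.
  rewrite <- !qten_assoc; f_equal.
  rewrite !qten_assoc; f_equal; apply qten_comm.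
Qed.

Hypothesis integral : qk V = qtop V.

Lemma qten_le_l (x y : V) : qle (qten x y) x.
Proof.
  apply qle_trans with (qten x (qk V)).
  - apply qten_mono_r; rewrite integral; apply qle_top.
  - rewrite qten_comm, qten_unit; apply qle_refl.
Qed.

Lemma qten_le_r (x y : V) : qle (qten x y) y.
Proof. rewrite qten_comm; apply qten_le_l. Qed.

Lemma qten_le_meet (x y : V) : qle (qten x y) (qmeet x y).
Proof. apply qmeet_glb; [apply qten_le_l | apply qten_le_r]. Qed.

End QuantaleFacts.

Section HeytingImplication.
Variables (V : quantale) (frame : is_frame V).

Definition qimp (a c : V) : V := qsup (fun z => qle (qmeet z a) c).

Lemma qimp_intro (a c w : V) : qle (qmeet w a) c -> qle w (qimp a c).
Proof. intros H; apply qsup_ub; exact H. Qed.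

Lemma qimp_mp (a c w : V) : qle w (qimp a c) -> qle w a -> qle w c.
Proof.
  intros Himp Ha.
  apply qle_trans with (qmeet (qimp a c) a); [apply qmeet_glb; assumption|].
  rewrite qmeet_comm; unfold qimp; rewrite frame.
  apply qsup_least; intros x [s [Hs ->]].
  rewrite qmeet_comm; exact Hs.
Qed.

End HeytingImplication.

Section VGroupFacts.
Variables (V : quantale) (Y : vgrp V).

Lemma gd_refl_tenl (x : Y) (v : V) : qle v (qten (gd x x) v).
Proof.
  rewrite <- (qten_unit v) at 1.
  apply qten_mono; [apply gd_refl | apply qle_refl].
Qed.

Lemma gd_refl_tenr (x : Y) (v : V) : qle v (qten v (gd x x)).
Proof. rewrite qten_comm; apply gd_refl_tenl. Qed.

Lemma gd_addl_le (a x y : Y) : qle (gd x y) (gd (gadd a x) (gadd a y)).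
Proof. eapply qle_trans; [apply (gd_refl_tenl a) | apply gd_add]. Qed.

Lemma gd_addr_le (a x y : Y) : qle (gd x y) (gd (gadd x a) (gadd y a)).
Proof. eapply qle_trans; [apply (gd_refl_tenr a) | apply gd_add]. Qed.

Lemma gd_addl (a x y : Y) : gd (gadd a x) (gadd a y) = gd x y.
Proof.
  apply qle_antisym; [|apply gd_addl_le].
  eapply qle_trans; [apply (gd_addl_le (gopp a))|].
  rewrite !gaddA, gaddNl, !gadd0l; apply qle_refl.
Qed.

Lemma gd_addr (a x y : Y) : gd (gadd x a) (gadd y a) = gd x y.
Proof.
  apply qle_antisym; [|apply gd_addr_le].
  eapply qle_trans; [apply (gd_addr_le (gopp a))|].
  rewrite <- !gaddA, gaddNr, !gadd0r; apply qle_refl.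
Qed.

Definition id_hom : vhom Y Y :=
  @VHom V Y Y (fun x => x) (fun _ _ => eq_refl) (fun x y => qle_refl (gd x y)).

Hypothesis integral : qk V = qtop V.

Lemma gd_top (v : V) (x : Y) : qle v (gd x x).
Proof. eapply qle_trans; [|apply gd_refl]; rewrite integral; apply qle_top. Qed.

Definition zero_hom : vhom Y Y :=
  @VHom V Y Y (fun _ => g0 Y) (fun _ _ => eq_sym (gadd0l (g0 Y)))
    (fun x y => gd_top (gd x y) (g0 Y)).

End VGroupFacts.

Section TensorProduct.
Variables (V : quantale) (A B : vgrp V).

Definition tensgrp : vgrp V.
Proof.
  refine (@VGrp V (A * B)%type (g0 A, g0 B)
    (fun p q => (gadd (fst p) (fst q), gadd (snd p) (snd q)))
    (fun p => (gopp (fst p), gopp (snd p)))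
    _ _ _ _ _ (fun p q => qten (gd (fst p) (fst q)) (gd (snd p) (snd q))) _ _ _).
  - intros [] [] []; simpl; rewrite !gaddA; reflexivity.
  - intros []; simpl; rewrite !gadd0l; reflexivity.
  - intros []; simpl; rewrite !gadd0r; reflexivity.
  - intros []; simpl; rewrite !gaddNl; reflexivity.
  - intros []; simpl; rewrite !gaddNr; reflexivity.
  - intros []; simpl; rewrite <- (qten_unit (qk V)) at 1.
    apply qten_mono; apply gd_refl.
  - intros [] [] []; simpl; rewrite qten_swap; apply qten_mono; apply gd_trans.
  - intros [] [] [] []; simpl; rewrite qten_swap; apply qten_mono; apply gd_add.
Defined.

End TensorProduct.

Section StrongPoints.
Variable V : quantale.

Lemma strong_point_bijection_reflects (A Y M : vgrp V) (f : vhom A Y) (s : vhom Y A)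
    (m : vhom M A) (r : A -> M) :
  strong_point f s ->
  (forall u, r (m u) = u) -> (forall a, m (r a) = a) ->
  (forall a a', f a = g0 Y -> f a' = g0 Y -> qle (gd a a') (gd (r a) (r a'))) ->
  (forall y y', qle (gd y y') (gd (r (s y)) (r (s y')))) ->
  forall u v, qle (gd (m u) (m v)) (gd u v).
Proof.
  intros Hstrong Hrm Hmr Hker Hsec.
  assert (r_add : forall a a', r (gadd a a') = gadd (r a) (r a')).
  { intros a a'; rewrite <- (Hrm (gadd (r a) (r a'))), hadd, !Hmr; reflexivity. }
  assert (Hiso : is_iso m).
  { apply Hstrong.
    - intros Z u v Huv z; rewrite <- (Hrm (u z)), Huv; apply Hrm.
    - exists (@VHom V _ M (fun k => r (kerincl f k))
                (fun k k' => r_add _ _)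
                (fun k k' => Hker _ _ (proj2_sig k) (proj2_sig k'))).
      intros k; apply Hmr.
    - exists (@VHom V _ M (fun y => r (s y))
                (fun y y' => eq_trans (f_equal r (hadd s y y')) (r_add _ _)) Hsec).
      intros y; apply Hmr. }
  destruct Hiso as [n [Hnm _]].
  intros u v; pose proof (hd n (m u) (m v)) as H; rewrite !Hnm in H; exact H.
Qed.

End StrongPoints.

Section MeetIsTensor.
Variables (V : quantale) (integral : qk V = qtop V) (Y : vgrp V).

Definition tens_to_pb_zero : vhom (tensgrp Y Y) (pbgrp (prod_snd Y Y) (zero_hom Y integral)).
Proof.
  refine (@VHom V (tensgrp Y Y) (pbgrp (prod_snd Y Y) (zero_hom Y integral))
            (fun p => exist _ (fst p, (snd p, g0 Y)) eq_refl) _ _).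
  - intros [] []; apply subset_eq_compat; simpl; rewrite gadd0l; reflexivity.
  - intros [x y] [x' y']; simpl.
    apply qmeet_glb; [apply qten_le_l; exact integral|].
    apply qmeet_glb; [apply qten_le_r; exact integral | apply gd_top; exact integral].
Defined.

Lemma tens_to_pb_zero_reflects (HY : strongly_unital Y) (u v : Y * Y) :
  qle (gd (tens_to_pb_zero u) (tens_to_pb_zero v)) (gd (v := tensgrp Y Y) u v).
Proof.
  apply (strong_point_bijection_reflects (HY Y (zero_hom Y integral))
           (M := tensgrp Y Y) (r := fun p : pbgrp (prod_snd Y Y) (zero_hom Y integral) =>
                     (fst (proj1_sig p), fst (snd (proj1_sig p))))).
  - intros [x y]; reflexivity.
  - intros [[z [a1 a2]] Hp]; simpl in Hp; subst; apply subset_eq_compat; reflexivity.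
  - intros [[z [a1 a2]] Hp] [[z' [a1' a2']] Hp'] Hz Hz'; simpl in *; subst.
    eapply qle_trans; [|apply gd_refl_tenl].
    eapply qle_trans; [apply qmeet_r | apply qmeet_l].
  - intros z z'; apply gd_refl_tenr.
Qed.

Lemma strongly_unital_meet_le_ten (HY : strongly_unital Y) (x x' y y' : Y) :
  qle (qmeet (gd x x') (gd y y')) (qten (gd x x') (gd y y')).
Proof.
  eapply qle_trans; [|exact (tens_to_pb_zero_reflects HY (x, y) (x', y'))]; simpl.
  apply qmeet_glb; [apply qmeet_l|].
  apply qmeet_glb; [apply qmeet_r | apply gd_top; exact integral].
Qed.

End MeetIsTensor.

Section RelativeSymmetry.
Variables (V : quantale) (integral : qk V = qtop V) (frame : is_frame V) (Y : vgrp V).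
Hypothesis meet_le_ten :
  forall x x' y y' : Y, qle (qmeet (gd x x') (gd y y')) (qten (gd x x') (gd y y')).

Lemma gd_trans_meet (w : V) (x y z : Y) :
  qle w (gd x y) -> qle w (gd y z) -> qle w (gd x z).
Proof.
  intros Hxy Hyz; eapply qle_trans; [apply (qmeet_glb Hxy Hyz)|].
  eapply qle_trans; [apply meet_le_ten | apply gd_trans].
Qed.

Lemma gd_add_meet (w : V) (x1 x2 y1 y2 : Y) :
  qle w (gd x1 x2) -> qle w (gd y1 y2) -> qle w (gd (gadd x1 y1) (gadd x2 y2)).
Proof.
  intros Hx Hy; eapply qle_trans; [apply (qmeet_glb Hx Hy)|].
  eapply qle_trans; [apply meet_le_ten | apply gd_add].
Qed.

Definition gd_relsym (p q : Y * Y) : V :=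
  qmeet (gd (fst p) (fst q))
    (qmeet (gd (snd p) (snd q)) (qimp (gd (fst q) (fst p)) (gd (snd q) (snd p)))).

Lemma qle_gd_relsym (w : V) (p q : Y * Y) :
  qle w (gd_relsym p q) <->
  qle w (gd (fst p) (fst q)) /\ qle w (gd (snd p) (snd q)) /\
  qle w (qimp (gd (fst q) (fst p)) (gd (snd q) (snd p))).
Proof.
  unfold gd_relsym; split.
  - intros H; repeat split; eapply qle_trans; try exact H.
    + apply qmeet_l.
    + eapply qle_trans; [apply qmeet_r | apply qmeet_l].
    + eapply qle_trans; [apply qmeet_r | apply qmeet_r].
  - intros (H1 & H2 & H3); repeat apply qmeet_glb; assumption.
Qed.

Lemma gd_relsym_refl (p : Y * Y) : qle (qk V) (gd_relsym p p).
Proof.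
  apply qle_gd_relsym; repeat split; try apply gd_refl.
  apply qimp_intro; apply gd_top; exact integral.
Qed.

Lemma gd_relsym_trans_meet (w : V) (p q r : Y * Y) :
  qle w (gd_relsym p q) -> qle w (gd_relsym q r) -> qle w (gd_relsym p r).
Proof.
  rewrite !qle_gd_relsym; intros (Hpq1 & Hpq2 & Hpq3) (Hqr1 & Hqr2 & Hqr3).
  repeat split; [eapply gd_trans_meet; eassumption ..|].
  apply qimp_intro.
  assert (Hw : qle (qmeet w (gd (fst r) (fst p))) w) by apply qmeet_l.
  assert (Hrp : qle (qmeet w (gd (fst r) (fst p))) (gd (fst r) (fst p))) by apply qmeet_r.
  apply gd_trans_meet with (snd q).
  - apply (qimp_mp frame (qle_trans Hw Hqr3)).
    apply gd_trans_meet with (fst p); [exact Hrp | exact (qle_trans Hw Hpq1)].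
  - apply (qimp_mp frame (qle_trans Hw Hpq3)).
    apply gd_trans_meet with (fst r); [exact (qle_trans Hw Hqr1) | exact Hrp].
Qed.

Lemma gd_relsym_add_meet (w : V) (p p' q q' : Y * Y) :
  qle w (gd_relsym p p') -> qle w (gd_relsym q q') ->
  qle w (gd_relsym (gadd (fst p) (fst q), gadd (snd p) (snd q))
                   (gadd (fst p') (fst q'), gadd (snd p') (snd q'))).
Proof.
  rewrite !qle_gd_relsym; simpl; intros (Hp1 & Hp2 & Hp3) (Hq1 & Hq2 & Hq3).
  repeat split; [apply gd_add_meet; assumption ..|].
  apply qimp_intro.
  set (w' := qmeet w _).
  assert (Hw : qle w' w) by apply qmeet_l.
  assert (Hsum : qle w' (gd (gadd (fst p') (fst q')) (gadd (fst p) (fst q))))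
    by apply qmeet_r.
  apply gd_add_meet.
  - apply (qimp_mp frame (qle_trans Hw Hp3)).
    rewrite <- (gd_addr (fst q')).
    apply gd_trans_meet with (gadd (fst p) (fst q)); [exact Hsum|].
    rewrite gd_addl; exact (qle_trans Hw Hq1).
  - apply (qimp_mp frame (qle_trans Hw Hq3)).
    rewrite <- (gd_addl (fst p')).
    apply gd_trans_meet with (gadd (fst p) (fst q)); [exact Hsum|].
    rewrite gd_addr; exact (qle_trans Hw Hp1).
Qed.

Definition relsymgrp : vgrp V.
Proof.
  refine (@VGrp V (Y * Y)%type (g0 Y, g0 Y)
    (fun p q => (gadd (fst p) (fst q), gadd (snd p) (snd q)))
    (fun p => (gopp (fst p), gopp (snd p)))
    _ _ _ _ _ gd_relsym gd_relsym_refl _ _).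
  - intros [] [] []; simpl; rewrite !gaddA; reflexivity.
  - intros []; simpl; rewrite !gadd0l; reflexivity.
  - intros []; simpl; rewrite !gadd0r; reflexivity.
  - intros []; simpl; rewrite !gaddNl; reflexivity.
  - intros []; simpl; rewrite !gaddNr; reflexivity.
  - intros p q r; eapply qle_trans; [apply qten_le_meet; exact integral|].
    apply gd_relsym_trans_meet with q; [apply qmeet_l | apply qmeet_r].
  - intros p p' q q'; eapply qle_trans; [apply qten_le_meet; exact integral|].
    apply gd_relsym_add_meet; [apply qmeet_l | apply qmeet_r].
Defined.

Definition relsym_to_pb_id : vhom relsymgrp (pbgrp (prod_snd Y Y) (id_hom Y)).
Proof.
  refine (@VHom V relsymgrp (pbgrp (prod_snd Y Y) (id_hom Y))
            (fun p => exist _ (snd p, p) eq_refl) _ _).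
  - intros [] []; apply subset_eq_compat; reflexivity.
  - intros p q; simpl.
    destruct (proj1 (qle_gd_relsym _ p q) (qle_refl _)) as (H1 & H2 & _).
    repeat apply qmeet_glb; assumption.
Defined.

Lemma relsym_to_pb_id_reflects (HY : strongly_unital Y) (u v : Y * Y) :
  qle (gd (relsym_to_pb_id u) (relsym_to_pb_id v)) (gd_relsym u v).
Proof.
  apply (strong_point_bijection_reflects (HY Y (id_hom Y)) (M := relsymgrp)
           (r := fun p : pbgrp (prod_snd Y Y) (id_hom Y) => snd (proj1_sig p))).
  - intros [x y]; reflexivity.
  - intros [[z [a1 a2]] Hp]; simpl in Hp; subst; apply subset_eq_compat; reflexivity.
  - intros [[z [a1 a2]] Hp] [[z' [a1' a2']] Hp'] Hz Hz'; simpl in *; subst.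
    apply qle_gd_relsym; simpl; repeat split.
    + eapply qle_trans; [apply qmeet_r | apply qmeet_l].
    + apply gd_top; exact integral.
    + apply qimp_intro; apply gd_top; exact integral.
  - intros z z'; apply qle_gd_relsym; simpl; repeat split; try apply qle_refl.
    apply qimp_intro; apply qmeet_r.
Qed.

End RelativeSymmetry.

Lemma strongly_unital_gd_le_sym (V : quantale) (integral : qk V = qtop V) (frame : is_frame V)
    (Y : vgrp V) (HY : strongly_unital Y) (y : Y) :
  qle (gd (g0 Y) y) (gd y (g0 Y)).
Proof.
  set (m := relsym_to_pb_id integral frame (strongly_unital_meet_le_ten integral HY)).
  assert (Hy : qle (gd (g0 Y) y) (gd (m (g0 Y, g0 Y)) (m (g0 Y, y)))).
  { simpl; repeat apply qmeet_glb; try apply qle_refl; apply gd_top; exact integral. }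
  pose proof (qle_trans Hy (relsym_to_pb_id_reflects _ _ _ HY _ _)) as H.
  apply qle_gd_relsym in H; destruct H as (_ & _ & Himp).
  apply (qimp_mp frame Himp); apply gd_top; exact integral.
Qed.

Theorem proposition6p4 :
  forall (V : quantale), is_frame V -> qk V = qtop V ->
  forall (Y : vgrp V), strongly_unital Y ->
  forall y : Y, gd (g0 Y) y = qten (gd y (g0 Y)) (gd (g0 Y) y).
Proof.
  intros V frame integral Y HY y; apply qle_antisym.
  - eapply qle_trans; [|apply (strongly_unital_meet_le_ten integral HY)].
    apply qmeet_glb; [apply (strongly_unital_gd_le_sym integral frame HY) | apply qle_refl].
  - apply qten_le_r; exact integral.
Qed.
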